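(* In the probabilistic Outcome Logic instance, let $C$ be a program, $\varphi$ an outcome assertion, $A$ a state assertion, and $p,q\in[0,1]$ with $q>1-p$. If there is an outcome assertion $\varphi'$ with $\varphi'\Rightarrow\varphi$, $\mathsf{sat}(\varphi')$ and $\vDash\langle\varphi'\rangle\,C\,\langle\mathbb{P}[\lnot A]\ge q\rangle$, then $\not\vDash\langle\varphi\rangle\,C\,\langle\mathbb{P}[A]\ge p\rangle$.
   Context: Subdistributions $\mu\colon\Sigma\to[0,1]$ with mass $|\mu|=\sum_\sigma\mu(\sigma)\le1$, support $\mathsf{supp}(\mu)$, zero $\varnothing$, and partial pointwise sum $+$ (defined when total mass $\le1$). Execution model: $\mathsf{bind}(\mu,k)=\sum_{x\in\mathsf{supp}(\mu)}\mu(x)\,k(x)$, $\mathsf{unit}(x)=\delta_x$, monoid $(+,\varnothing)$; a program $C$ has semantics $[\![C]\!]\colon\Sigma\to\mathcal{D}\Sigma$ and $[\![C]\!]^\dagger(\mu)=\mathsf{bind}(\mu,[\![C]\!])$. Atomic outcome assertions $\mathbb{P}[A]=p$ for state assertions $A$: $\mu\vDash\mathbb{P}[A]=p$ iff $|\mu|=p$ and all states in $\mathsf{supp}(\mu)$ satisfy $A$. Outcome assertions use $\top$ (always), $\bot$, $\top^\oplus$ (only $\varnothing$), classical $\land,\Rightarrow$, and $\oplus$: $\mu\vDash\varphi\oplus\psi$ iff $\mu=\mu_1+\mu_2$ with $\mu_1\vDash\varphi$, $\mu_2\vDash\psi$. $\mathbb{P}[A]\ge p$ abbreviates $(\mathbb{P}[A]=p)\oplus\top$.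 $\vDash\langle\varphi\rangle C\langle\psi\rangle$ iff $\mu\vDash\varphi$ implies $[\![C]\!]^\dagger(\mu)\vDash\psi$ for every $\mu$. $\varphi'\Rightarrow\varphi$ means every $\mu$ satisfying $\varphi'$ satisfies $\varphi$; $\mathsf{sat}(\varphi')$ means some $\mu$ satisfies $\varphi'$. *)

From HB Require Import structures.
From mathcomp Require Import all_boot all_order all_algebra.
From mathcomp Require Import all_classical all_reals.
From mathcomp Require Import ereal esum.
Set Implicit Arguments. Unset Strict Implicit. Unset Printing Implicit Defensive.
Import Order.TTheory GRing.Theory Num.Theory.
Local Open Scope classical_set_scope.
Local Open Scope ring_scope.

Section POL.
Context {R : realType} {Sigma : choiceType}.

Definition dist := Sigma -> R.

Definition mass (mu : dist) : \bar R := \esum_(s in [set: Sigma]) (mu s)%:E.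

Definition is_subdist (mu : dist) : Prop :=
  (forall s, 0 <= mu s) /\ (mass mu <= 1%:E)%E.

Definition supp (mu : dist) : set Sigma := [set s | mu s != 0].

Definition zero_dist : dist := fun _ => 0.

Definition add_dist (mu1 mu2 : dist) : dist := fun s => mu1 s + mu2 s.

Definition bind (mu : dist) (k : Sigma -> dist) : dist :=
  fun y => fine (\esum_(x in supp mu) (mu x * k x y)%:E).

Definition unit_dist (x : Sigma) : dist := fun y => if y == x then 1 else 0.

(* [[C]]^dagger for a program with semantics k : Sigma -> D Sigma *)
Definition lift (k : Sigma -> dist) (mu : dist) : dist := bind mu k.

Inductive oassn : Type :=
  | OTop : oassn
  | OBot : oassn
  | OTopPlus : oassn
  | OAtom : (Sigma -> Prop) -> R -> oassn
  | OAnd : oassn -> oassn -> oassn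
  | OImp : oassn -> oassn -> oassn
  | OPlus : oassn -> oassn -> oassn.

Fixpoint osat (phi : oassn) (mu : dist) : Prop :=
  match phi with
  | OTop => True
  | OBot => False
  | OTopPlus => mu = zero_dist
  | OAtom A p => mass mu = p%:E /\ (forall s, supp mu s -> A s)
  | OAnd phi1 phi2 => osat phi1 mu /\ osat phi2 mu
  | OImp phi1 phi2 => osat phi1 mu -> osat phi2 mu
  | OPlus phi1 phi2 => exists mu1 mu2,
      [/\ is_subdist mu1, is_subdist mu2, is_subdist (add_dist mu1 mu2),
          mu = add_dist mu1 mu2 & osat phi1 mu1 /\ osat phi2 mu2]
  end.

Definition OGe (A : Sigma -> Prop) (p : R) : oassn := OPlus (OAtom A p) OTop.

Definition valid (phi : oassn) (k : Sigma -> dist) (psi : oassn) : Prop :=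
  forall mu, is_subdist mu -> osat phi mu -> osat psi (lift k mu).

Definition oentails (phi' phi : oassn) : Prop :=
  forall mu, is_subdist mu -> osat phi' mu -> osat phi mu.

Definition osatisfiable (phi : oassn) : Prop :=
  exists mu, is_subdist mu /\ osat phi mu.

End POL.

From mathcomp Require Import all_boot all_order all_algebra.
From mathcomp Require Import all_classical all_reals.
From mathcomp Require Import ereal esum.
Import Order.TTheory GRing.Theory Num.Theory.
Local Open Scope ring_scope.

(** Both postconditions are properties of the single output [nu = [[C]]^dagger(mu)]
    for any [mu] satisfying [phi'].  They give two parts of [nu], of masses [p] and
    [q], supported on [A] and on its complement; being disjointly supported they fit
    together under [nu], so [p + q <= |nu| <= 1], contradicting [q > 1 - p]. *)

Section ProbabilisticOutcomes.
Context {R : realType} {Sigma : choiceType}.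

Implicit Types (mu nu : @dist R Sigma) (A : Sigma -> Prop) (p q : R).

Lemma mass_add mu1 mu2 : (forall s, 0 <= mu1 s) -> (forall s, 0 <= mu2 s) ->
  mass (add_dist mu1 mu2) = (mass mu1 + mass mu2)%E.
Proof.
move=> mu1_ge0 mu2_ge0; rewrite /mass -esumD //.
- by move=> s _; rewrite lee_fin.
- by move=> s _; rewrite lee_fin.
Qed.

Lemma le_mass mu nu : (forall s, mu s <= nu s) -> (mass mu <= mass nu)%E.
Proof. by move=> le_mu_nu; apply: le_esum => s _; rewrite lee_fin. Qed.

Lemma supp_notin {mu A s} : (forall t, supp mu t -> A t) -> ~ A s -> mu s = 0.
Proof. by move=> suppA notAs; apply/eqP/negbNE/negP => /suppA. Qed.

Lemma add_dist_le_disjoint {mu1 mu2 nu A} :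
  (forall s, mu1 s <= nu s) -> (forall s, mu2 s <= nu s) ->
  (forall s, supp mu1 s -> A s) -> (forall s, supp mu2 s -> ~ A s) ->
  forall s, add_dist mu1 mu2 s <= nu s.
Proof.
move=> le1 le2 supp1 supp2 s; rewrite /add_dist.
have [As | notAs] := pselect (A s).
- by rewrite (supp_notin supp2 (fun nAs => nAs As)) addr0.
- by rewrite (supp_notin supp1 notAs) add0r.
Qed.

Lemma osat_OGeP {A p nu} : osat (OGe A p) nu ->
  exists mu, [/\ forall s, 0 <= mu s, mass mu = p%:E,
                 forall s, supp mu s -> A s & forall s, mu s <= nu s].
Proof.
move=> /= [mu [rest [[mu_ge0 _] [rest_ge0 _] _ -> [[mass_mu suppA] _]]]].
exists mu; split=> // s; rewrite /add_dist lerDl; exact: rest_ge0.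
Qed.

Lemma osat_OGe_mass_le1 {A p nu} : osat (OGe A p) nu -> (mass nu <= 1%:E)%E.
Proof. by move=> /= [mu [rest [_ _ [_ sum_le1] -> _]]]. Qed.

Lemma osat_OGe_compl_le1 {A p q nu} :
  osat (OGe A p) nu -> osat (OGe (fun s => ~ A s) q) nu -> p + q <= 1.
Proof.
move=> satA satNA; rewrite -lee_fin.
have [mu [mu_ge0 mass_mu suppA le_mu]] := osat_OGeP satA.
have [mu' [mu'_ge0 mass_mu' suppNA le_mu']] := osat_OGeP satNA.
apply: le_trans (osat_OGe_mass_le1 satA).
rewrite EFinD -mass_mu -mass_mu' -mass_add //.
exact/le_mass/(add_dist_le_disjoint le_mu le_mu' suppA suppNA).
Qed.

End ProbabilisticOutcomes.

Theorem theorem5p11 (R : realType) (Sigma : choiceType)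
  (k : Sigma -> @dist R Sigma) (hk : forall s, is_subdist (k s))
  (phi : @oassn R Sigma) (A : Sigma -> Prop) (p q : R) :
  0 <= p <= 1 -> 0 <= q <= 1 -> q > 1 - p ->
  (exists phi' : @oassn R Sigma,
     [/\ oentails phi' phi, osatisfiable phi' &
         valid phi' k (OGe (fun s => ~ A s) q)]) ->
  ~ valid phi k (OGe A p).
Proof.
move=> _ _ gt_q [phi' [ent_phi [mu [mu_sub mu_phi']] valid_NA]] valid_A.
have satA := valid_A mu mu_sub (ent_phi mu mu_sub mu_phi').
apply/negP: (osat_OGe_compl_le1 satA (valid_NA mu mu_sub mu_phi')).
by rewrite -ltNge -ltrBlDl.
Qed.
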